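(* Let $(m,q,d,\tau)$ be suitable parameters (in the sense defined in the context) and let $\Pi$ be the shifted projection protocol for these parameters. Then $\Pi$ is informative and perfectly safe.
   Context: Agents: $\mathcal A=\{A,B_1,\dots,B_m\}$, speaking in the fixed order $A,B_1,\dots,B_m$. A distribution type is a vector $\tau=(\tau_P)_{P\in\mathcal A}$ of positive integers, $|\tau|=\sum_P\tau_P$. The deck $\Omega$ is a set of $|\tau|$ cards; a deal of type $\tau$ is a partition $H=(H_P)_{P\in\mathcal A}$ of $\Omega$ with $|H_P|=\tau_P$ ($H_P$ is the hand of $P$). Suitable parameters: $(m,q,d,\tau)$ with $m>1$, $q>m$ a prime power, $d>0$ an integer, $\tau$ a distribution type over $\mathcal A$ with $|\tau|=q^{d+1}$, $\tau_A=q^{d+1}-q^d$ and $\tau_{B_k}>q^{d-1}$ for every $k\in[1,m]$; the deck $\Omega$ has $q^{d+1}$ cards. Geometry over the field $\mathbb F_q$: a transversal hyperplane of $\mathbb F_q^{d+1}$ is the set of points $x$ with $x_{d+1}=a_1x_1+\dots+a_dx_d+b$ for some $a_1,\dots,a_d,b\in\mathbb F_q$; its slope is $\sigma(V)=(a_1,\dots,a_d)\in\mathbb F_q^d$. Let $\pi:\mathbb F_q^{d+1}\to\mathbb F_q^d$ be projection onto the first $d$ coordinates; for a transversal hyperplane $V$, $\pi|_V$ is a bijection onto $\mathbb F_q^d$ with inverse $\iota_V$. Define $\pi^V_{\downarrow}:V\to\mathbb F_q^d$, $\pi^V_\downarrow(w)=\pi(w)+\sigma(V)$, and $\pi^V_\uparrow:\mathbb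 F_q^d\to V$, $\pi^V_\uparrow(y)=\iota_V(y-\sigma(V))$. Shifted projection protocol: tokens are maps $f:\Omega\to\mathbb F_q^{d+1}$ and subsets of $\mathbb F_q^d$. A run is a finite sequence of tokens; $\rho*a$ appends $a$, $\rho_{<k}$ is the prefix of length $k$. For a deal $H$, its maximal executions are the tuples $(H,f,X_1,\dots,X_m)$ where $f:\Omega\to\mathbb F_q^{d+1}$ is a bijection such that $V=\mathbb F_q^{d+1}\setminus f[H_A]$ is a transversal hyperplane, and $X_k=\pi^V_\downarrow[f[H_{B_k}]]$ for each $k\in[1,m]$. Set $\Pi(H,\rho)$ = set of tokens $a$ such that $(H,\rho*a)$ is an initial segment of a maximal execution. An execution is a pair $(H,\rho)$, $\rho=a_0,\dots,a_n$, with $a_k\in\Pi(H,\rho_{<k})$ for all $k\le n$; $\rho$ is a run of $\Pi$ if some $(H,\rho)$ is an execution; an execution $(H,\rho)$ is terminal if $\Pi(H,\rho)=\emptyset$. Informative: for every terminal execution $(H,\rho)$ and every agent $P$, there is no execution $(H',\rho)$ with $H'\neq H$ and $H'_P=H_P$. Probability model: a deal $H$ of type $\tau$ is drawn uniformly at random; then starting from the empty run, while $\Pi(H,\rho)\ne\emptyset$ for the current run $\rho$, a token is drawn uniformly from $\Pi(H,\rho)$ and appended. For a run $\rho$, ''$\rho$'' is the event that the first $|\rho|$ tokens produced are exactly $\rho$. Perfectly safe: for every run $\rho$ of $\Pi$, every card $c\in\Omega$ and every agent $P$, $\Pr(c\in H_P\mid\rho)=\tau_P/|\tau|$. *)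

From HB Require Import structures.
From mathcomp Require Import all_boot all_order all_algebra.
Set Implicit Arguments. Unset Strict Implicit. Unset Printing Implicit Defensive.
Import Order.TTheory GRing.Theory Num.Theory.
Local Open Scope ring_scope.

Section ShiftedProjection.
(* m : number of B-agents; F : the field F_q (q = #|F|); Omega : the deck. *)
Variables (m d : nat) (F : finFieldType) (Omega : finType).

Definition agent := 'I_m.+1.
Definition agentA : agent := ord0.
Definition agentB (k : 'I_m) : agent := lift ord0 k.

Definition deal := {ffun Omega -> agent}.
Definition hand (h : deal) (P : agent) : {set Omega} := [set c | h c == P].
Definition is_deal (tau : agent -> nat) (h : deal) : bool :=
  [forall P : agent, #|hand h P| == tau P].

Definition point := 'rV[F]_(d.+1).
Definition dpoint := 'rV[F]_d.

Definition sp_proj (x : point) : dpoint := \row_(i < d) x 0 (widen_ord (leqnSn d) i).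

Definition hyperplane (a : dpoint) (b : F) : {set point} :=
  [set x : point | x 0 ord_max == \sum_(i < d) a 0 i * x 0 (widen_ord (leqnSn d) i) + b].

Definition transversal (V : {set point}) : bool :=
  [exists a : dpoint, exists b : F, V == hyperplane a b].

(* the slope of a transversal hyperplane (it is unique) *)
Definition slope (V : {set point}) : dpoint :=
  odflt 0 [pick a : dpoint | [exists b : F, V == hyperplane a b]].

Definition proj_down (V : {set point}) (w : point) : dpoint := sp_proj w + slope V.
Definition proj_up (V : {set point}) (y : dpoint) : point :=
  odflt 0 [pick w : point | (w \in V) && (sp_proj w == y - slope V)].

Definition token := ({ffun Omega -> point} + {set dpoint})%type.
Definition run := seq token.

Definition bijb (f : {ffun Omega -> point}) : bool :=
  injectiveb f && [forall y : point, y \in codom f].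

(* maximal executions (H, f, X_1, ..., X_m), as the run [:: f; X_1; ...; X_m] *)
Definition max_exec (h : deal) (s : run) : bool :=
  (size s == m.+1) &&
  match s with
  | inl f :: rest =>
      let V := ~: (f @: hand h agentA) in
      [&& bijb f, transversal V &
          [forall k : 'I_m,
             nth (inr set0) rest k == inr (proj_down V @: (f @: hand h (agentB k)))]]
  | _ => false
  end.

(* Pi(H, rho): tokens a such that rho*a is an initial segment of a maximal
   execution of H (maximal executions have length m+1). *)
Definition Pi (h : deal) (rho : run) : {set token} :=
  [set a : token | [exists t : (m.+1 - size (rcons rho a)).-tuple token,
                      max_exec h (rcons rho a ++ t)]].

Definition execution (h : deal) (rho : run) : bool :=
  [forall k : 'I_(size rho), nth (inr set0) rho k \in Pi h (take k rho)].

Definition is_run (tau : agent -> nat) (rho : run) : bool :=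
  [exists h : deal, is_deal tau h && execution h rho].

Definition informative (tau : agent -> nat) : Prop :=
  forall (h : deal) (rho : run), is_deal tau h -> execution h rho -> Pi h rho = set0 ->
  forall P : agent, ~ exists h' : deal,
    [/\ is_deal tau h', execution h' rho, h' <> h & hand h' P = hand h P].

(* Probability model: uniform deal of type tau, then uniform tokens. *)
Definition deal_prob (tau : agent -> nat) (h : deal) : rat :=
  if is_deal tau h then (#|[set h' : deal | is_deal tau h']|%:R)^-1 else 0.

Definition path_prob (h : deal) (rho : run) : rat :=
  \prod_(k < size rho)
     (if nth (inr set0) rho k \in Pi h (take k rho)
      then (#|Pi h (take k rho)|%:R)^-1 else 0).

Definition prob_run (tau : agent -> nat) (rho : run) : rat :=
  \sum_(h : deal) deal_prob tau h * path_prob h rho.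

Definition prob_card_run (tau : agent -> nat) (c : Omega) (P : agent) (rho : run) : rat :=
  \sum_(h : deal | h c == P) deal_prob tau h * path_prob h rho.

Definition perfectly_safe (tau : agent -> nat) : Prop :=
  forall rho : run, is_run tau rho -> forall (c : Omega) (P : agent),
    prob_card_run tau c P rho / prob_run tau rho = (tau P)%:R / (\sum_(Q : agent) tau Q)%N%:R.

End ShiftedProjection.

(* A terminal run is a complete execution (f, X_1, ..., X_m) with f a
   bijection onto F^(d+1). Two deals producing it and sharing some hand give the same
   hyperplane V = F^(d+1) \ f[H_A]: for the hand of A this is immediate, and for a hand of
   B_k its image lies in both hyperplanes, whereas two distinct transversal hyperplanes
   meet in at most q^(d-1) points. Once V is known, H_A is determined, and since the
   shifted projection is injective on V, each X_k determines H_(B_k).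

   The shears x |-> (pi x + t, x_(d+1) - t.pi x + s) act transitively on
   F^(d+1), map transversal hyperplanes to transversal hyperplanes and commute with the
   shifted projections. Conjugated by f, a shear moving f c to f c' becomes a relabelling
   of the cards that leaves the probability of every run unchanged, so
   Pr(c in H_P and rho) does not depend on c; summing over c yields tau_P Pr(rho). *)

From Pilot Require Import Defs.
From HB Require Import structures.
From mathcomp Require Import all_boot all_order all_algebra.
From mathcomp Require Import fingroup perm.
From mathcomp Require Import ring.
Set Implicit Arguments. Unset Strict Implicit. Unset Printing Implicit Defensive.
Import Order.TTheory GRing.Theory Num.Theory.

Local Open Scope ring_scope.

Section DotProduct.
Variables (R : comPzRingType) (n : nat).
Implicit Types u v w : 'rV[R]_n.

Definition dot u v : R := \sum_(i < n) u 0 i * v 0 i.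

Lemma dotC u v : dot u v = dot v u.
Proof. by apply: eq_bigr => i _; rewrite mulrC. Qed.

Lemma dotDl u v w : dot (u + v) w = dot u w + dot v w.
Proof. by rewrite /dot -big_split; apply: eq_bigr => i _; rewrite mxE mulrDl. Qed.

Lemma dotDr u v w : dot u (v + w) = dot u v + dot u w.
Proof. by rewrite dotC dotDl !(dotC u). Qed.

Lemma dotNl u v : dot (- u) v = - dot u v.
Proof. by rewrite /dot -sumrN; apply: eq_bigr => i _; rewrite mxE mulNr. Qed.

Lemma dotNr u v : dot u (- v) = - dot u v.
Proof. by rewrite dotC dotNl dotC. Qed.

Lemma dotZr c u v : dot u (c *: v) = c * dot u v.
Proof. by rewrite /dot mulr_sumr; apply: eq_bigr => i _; rewrite mxE mulrCA. Qed.

Lemma dot0l v : dot 0 v = 0.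
Proof. by rewrite /dot big1 // => i _; rewrite mxE mul0r. Qed.

Lemma dot0r u : dot u 0 = 0.
Proof. by rewrite dotC dot0l. Qed.

Lemma dot_delta u j : dot u (delta_mx 0 j) = u 0 j.
Proof.
rewrite /dot (bigD1 j) //= big1 ?addr0 => [|i /negbTE nji]; first by rewrite mxE !eqxx mulr1.
by rewrite mxE nji andbF mulr0.
Qed.

End DotProduct.

(* The level sets of a nonzero linear form are translates of its kernel. *)
Lemma card_dot_fiber (F : finFieldType) n (u : 'rV[F]_n) (c : F) : u != 0 ->
  (#|[set y : 'rV[F]_n | dot u y == c]| * #|F| = #|F| ^ n)%N.
Proof.
move=> u_neq0.
have [i ui_neq0] : exists i, u 0 i != 0.
  apply/existsP; apply: contraR u_neq0; rewrite negb_exists => /forallP u0.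
  by apply/eqP/rowP => i; rewrite mxE; apply/eqP; rewrite -[_ == _]negbK u0.
pose e : 'rV[F]_n := (u 0 i)^-1 *: delta_mx 0 i.
have dot_ue : dot u e = 1 by rewrite dotZr dot_delta mulVf.
pose fiber c' := [set y : 'rV[F]_n | dot u y == c'].
have card_fiber c' : #|fiber c'| = #|fiber 0|.
  have -> : fiber c' = (fun y => y + c' *: e) @: fiber 0.
    rewrite (can_imset_pre _ (addrK (c' *: e))); apply/setP => y.
    by rewrite !inE dotDr dotNr dotZr dot_ue mulr1 subr_eq0.
  by rewrite card_imset //; apply: addIr.
rewrite card_fiber -[in RHS](mul1n n) -card_mx.
have -> : #|{: 'rV[F]_n}| = (\sum_(y : 'rV[F]_n) 1)%N by rewrite sum1_card.
rewrite (partition_big (dot u) predT) //= (eq_bigr (fun=> #|fiber 0|)).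
  by rewrite sum_nat_const mulnC.
move=> c' _.
by rewrite -(card_fiber c') -sum1_card; apply: eq_bigl => y; rewrite inE.
Qed.

Lemma imset_setC (T : finType) (g : T -> T) (A : {set T}) :
  injective g -> g @: (~: A) = ~: (g @: A).
Proof.
move=> g_inj; apply/setP => x.
have /codomP [y ->] : x \in codom g by apply: inj_card_onto.
by rewrite mem_imset // !inE mem_imset.
Qed.

Lemma exists_inj_imset (T1 T2 : finType) (x0 : T2) (S : {set T1}) (U : {set T2}) :
  #|T1| = #|T2| -> #|S| = #|U| -> exists g : T1 -> T2, injective g /\ g @: S = U.
Proof.
move=> cardT cardSU.
pose s1 := enum S ++ enum (~: S); pose s2 := enum U ++ enum (~: U).
pose g c := nth x0 s2 (index c s1).
have s1_all c : c \in s1 by rewrite mem_cat !mem_enum inE orbN.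
have size_s1 : size s1 = #|T1| by rewrite size_cat -!cardE cardsC.
have size_s2 : size s2 = #|T2| by rewrite size_cat -!cardE cardsC.
have s2_uniq : uniq s2.
  by rewrite cat_uniq !enum_uniq andbT; apply/hasPn => x; rewrite !mem_enum inE.
have g_inj : injective g.
  move=> c1 c2 /eqP; rewrite nth_uniq ?size_s2 -?cardT -?size_s1 ?index_mem // => /eqP eq_idx.
  by rewrite -(nth_index c1 (s1_all c1)) eq_idx nth_index.
exists g; split=> //; apply/eqP; rewrite eqEcard card_imset // cardSU leqnn andbT.
apply/subsetP => _ /imsetP [c Sc ->].
have idx_lt : (index c (enum S) < size (enum U))%N.
  by rewrite -cardE -cardSU cardE index_mem mem_enum.
by rewrite /g index_cat mem_enum Sc nth_cat idx_lt -(mem_enum (mem U)) mem_nth.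
Qed.

Lemma imset_in_inj (aT rT : finType) (f : aT -> rT) (D A B : {set aT}) :
  {in D &, injective f} -> A \subset D -> B \subset D -> f @: A = f @: B -> A = B.
Proof.
move=> f_inj; have preimE (C : {set aT}) : C \subset D -> C = D :&: f @^-1: (f @: C).
  move=> sCD; apply/setP => x; rewrite !inE.
  apply/idP/andP => [Cx | [Dx /imsetP [y Cy fxy]]]; first by rewrite (subsetP sCD) ?imset_f.
  by rewrite (f_inj x y Dx (subsetP sCD y Cy) fxy).
by move=> sAD sBD eqAB; rewrite (preimE A) // eqAB -preimE.
Qed.

Lemma widen_ord_lift n (j : 'I_n) : widen_ord (leqnSn n) j = lift ord_max j.
Proof. by apply: val_inj; rewrite /= /bump leqNgt ltn_ord. Qed.

Section Hyperplanes.
Variables (F : finFieldType) (d : nat).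
Local Notation point := (point d F).
Local Notation dpoint := (dpoint d F).
Implicit Types (x y : point) (a t v : dpoint) (b s z : F) (W : {set point}).

Definition mkpoint v z : point :=
  \row_(i < d.+1) if unlift ord_max i is Some j then v 0 j else z.

Lemma sp_proj_mkpoint v z : sp_proj (mkpoint v z) = v.
Proof. by apply/rowP => j; rewrite !mxE widen_ord_lift liftK. Qed.

Lemma mkpoint_last v z : mkpoint v z 0 ord_max = z.
Proof. by rewrite !mxE unlift_none. Qed.

Lemma point_eq x y : sp_proj x = sp_proj y -> x 0 ord_max = y 0 ord_max -> x = y.
Proof.
move=> eq_proj eq_last; apply/rowP => i; case: (unliftP ord_max i) => [j ->|->] //.
by have := congr1 (fun v : dpoint => v 0 j) eq_proj; rewrite !mxE widen_ord_lift.
Qed.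

Lemma in_hyperplane a b x : (x \in hyperplane a b) = (x 0 ord_max == dot a (sp_proj x) + b).
Proof. by rewrite inE /dot; congr (_ == _ + _); apply: eq_bigr => i _; rewrite mxE. Qed.

Lemma mkpoint_in_hyperplane a b v : mkpoint v (dot a v + b) \in hyperplane a b.
Proof. by rewrite in_hyperplane sp_proj_mkpoint mkpoint_last. Qed.

Lemma hyperplane_inj a a' b b' : hyperplane a b = hyperplane a' b' -> a = a' /\ b = b'.
Proof.
move=> eqH; have last_on v : dot a v + b = dot a' v + b'.
  have := mkpoint_in_hyperplane a b v.
  by rewrite eqH in_hyperplane sp_proj_mkpoint mkpoint_last => /eqP.
have eq_b : b = b' by have := last_on 0; rewrite !dot0r !add0r.
split=> //; apply/rowP => j.
by have := last_on (delta_mx 0 j); rewrite !dot_delta eq_b => /addIr.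
Qed.

Lemma slope_hyperplane a b : slope (hyperplane a b) = a.
Proof.
rewrite /slope; case: pickP => [a' /existsP [b' /eqP /hyperplane_inj []] //| no_slope].
by case/existsP: (no_slope a); exists b.
Qed.

Lemma sp_proj_hyperplane_inj a b : {in hyperplane a b &, injective (@sp_proj d F)}.
Proof.
move=> x y; rewrite !in_hyperplane => /eqP x_last /eqP y_last eq_proj.
by apply: point_eq; rewrite // x_last y_last eq_proj.
Qed.

Lemma card_hyperplane a b : #|hyperplane a b| = (#|F| ^ d)%N.
Proof.
rewrite -(card_in_imset (@sp_proj_hyperplane_inj a b)) -[d in RHS]mul1n -card_mx.
apply/eq_card => v; rewrite inE; apply/imsetP.
by exists (mkpoint v (dot a v + b)); rewrite ?mkpoint_in_hyperplane ?sp_proj_mkpoint.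
Qed.

(* The projection of the meet of two hyperplanes lies in a level set of [dot (a - a')]. *)
Lemma card_hyperplane_meet a a' b b' : (0 < d)%N -> hyperplane a b != hyperplane a' b' ->
  (#|hyperplane a b :&: hyperplane a' b'| <= #|F| ^ d.-1)%N.
Proof.
move=> d_gt0 neqH.
have proj_meet x : x \in hyperplane a b :&: hyperplane a' b' ->
    dot (a - a') (sp_proj x) == b' - b.
  rewrite inE !in_hyperplane => /andP [/eqP -> /eqP eq_last].
  rewrite dotDl dotNl.
  have -> : dot a (sp_proj x) = dot a' (sp_proj x) + b' - b by rewrite -eq_last addrK.
  by apply/eqP; ring.
have [eq_a | neq_a] := eqVneq a a'.
  rewrite (_ : _ :&: _ = set0) ?cards0 //; apply/setP => x; rewrite in_set0.
  apply/negP => /proj_meet; rewrite eq_a subrr dot0l eq_sym subr_eq0 => /eqP eq_b.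
  by move: neqH; rewrite eq_a eq_b eqxx.
have neq0 : a - a' != 0 by rewrite subr_eq0.
have := card_dot_fiber (b' - b) neq0.
rewrite -[in X in _ = X](prednK d_gt0) expnSr => /eqP.
rewrite eqn_pmul2r; last by apply/card_gt0P; exists 0.
move=> /eqP <-.
have proj_inj : {in hyperplane a b :&: hyperplane a' b' &, injective (@sp_proj d F)}.
  by move=> x y /setIP [x_ab _] /setIP [y_ab _]; apply: (sp_proj_hyperplane_inj x_ab y_ab).
rewrite -(card_in_imset proj_inj); apply: subset_leq_card.
apply/subsetP => _ /imsetP [x x_meet ->].
by rewrite inE proj_meet.
Qed.

Definition shear t s x : point :=
  mkpoint (sp_proj x + t) (x 0 ord_max - dot t (sp_proj x) + s).

Lemma shearK t s : cancel (shear t s) (shear (- t) (- s - dot t t)).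
Proof.
move=> x; apply: point_eq; rewrite /shear ?sp_proj_mkpoint ?mkpoint_last ?addrK //.
by rewrite dotNl dotDr; ring.
Qed.

Lemma shear_inj t s : injective (shear t s).
Proof. exact: can_inj (shearK t s). Qed.

Lemma shear_hyperplane t s a b :
  shear t s @: hyperplane a b = hyperplane (a - t) (b + s - dot (a - t) t).
Proof.
apply/eqP; rewrite eqEcard card_imset ?card_hyperplane ?leqnn ?andbT; last exact: shear_inj.
apply/subsetP => _ /imsetP [x + ->]; rewrite !in_hyperplane => /eqP x_last.
rewrite /shear mkpoint_last (sp_proj_mkpoint (sp_proj x + t)) x_last.
by rewrite dotDr !dotDl !dotNl; apply/eqP; ring.
Qed.

Lemma transversal_shear t s W : Defs.transversal (shear t s @: W) = Defs.transversal W.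
Proof.
have shear_trans t' s' W' : Defs.transversal W' -> Defs.transversal (shear t' s' @: W').
  case/existsP => a /existsP [b /eqP ->]; rewrite shear_hyperplane.
  by apply/existsP; eexists; apply/existsP; eexists.
apply/idP/idP => [/(shear_trans (- t) (- s - dot t t)) | /shear_trans //].
by rewrite -imset_comp (eq_imset _ (shearK t s)) imset_id.
Qed.

Lemma slope_shear t s W : Defs.transversal W -> slope (shear t s @: W) = slope W - t.
Proof. by case/existsP => a /existsP [b /eqP ->]; rewrite shear_hyperplane !slope_hyperplane. Qed.

Lemma proj_down_shear t s W x : Defs.transversal W ->
  proj_down (shear t s @: W) (shear t s x) = proj_down W x.
Proof. by move=> W_tr; rewrite /proj_down slope_shear // sp_proj_mkpoint addrACA subrr addr0. Qed.

Lemma shear_transitive x y : exists t s, shear t s x = y.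
Proof.
pose t := sp_proj y - sp_proj x.
exists t, (y 0 ord_max - x 0 ord_max + dot t (sp_proj x)).
by apply: point_eq; rewrite /shear ?sp_proj_mkpoint ?mkpoint_last /t; [rewrite addrC subrK | ring].
Qed.

Lemma proj_down_inj W : Defs.transversal W -> {in W &, injective (proj_down W)}.
Proof.
case/existsP => a /existsP [b /eqP W_ab] x y x_W y_W /addIr.
by rewrite W_ab in x_W y_W; apply: (sp_proj_hyperplane_inj x_W y_W).
Qed.

End Hyperplanes.

Section Protocol.
Variables (m d : nat) (F : finFieldType) (Omega : finType).
Local Notation deal := (deal m Omega).
Local Notation point := (point d F).
Local Notation token := (token d F Omega).
Local Notation run := (run d F Omega).
Local Notation agentA := (agentA m).
Implicit Types (tau : agent m -> nat) (h : deal) (f : {ffun Omega -> point})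
  (rho r s : run) (a : token).

Lemma PiP h rho a : reflect (exists s, max_exec h (rcons rho a ++ s)) (a \in Pi h rho).
Proof.
rewrite inE; apply: (iffP existsP) => [[s max_s] | [s max_s]]; first by exists (tval s).
have size_s : size s == (m.+1 - size (rcons rho a))%N.
  by move: max_s => /andP [/eqP <- _]; rewrite size_cat addKn.
by exists (Tuple size_s).
Qed.

Lemma max_exec_size h rho : max_exec h rho -> size rho = m.+1.
Proof. by case/andP => /eqP. Qed.

Lemma max_exec_inr h X s : max_exec h (inr X :: s) = false.
Proof. by rewrite /max_exec andbF. Qed.

Lemma execution_head h a s : execution h (a :: s) -> a \in Pi h [::].
Proof. by move/forallP/(_ ord0). Qed.

Lemma execution_last h r a : execution h (rcons r a) -> a \in Pi h r.
Proof.
move=> /forallP exec_ra; have r_lt : (size r < size (rcons r a))%N by rewrite size_rcons.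
by have := exec_ra (Ordinal r_lt); rewrite /= nth_rcons ltnn eqxx -cats1 take_size_cat.
Qed.

Lemma execution_terminal_max_exec h rho :
  Pi h ([::] : run) != set0 -> execution h rho -> Pi h rho = set0 -> max_exec h rho.
Proof.
case/lastP: rho => [/eqP // | r a _ /execution_last /PiP [[|b s] max_s] Pi0].
  by rewrite cats0 in max_s.
have : b \in Pi h (rcons r a) by apply/PiP; exists s; rewrite cat_rcons.
by rewrite Pi0 inE.
Qed.

Lemma execution_full_max_exec h rho : execution h rho -> size rho = m.+1 -> max_exec h rho.
Proof.
case/lastP: rho => // r a /execution_last /PiP [s max_s] size_ra.
have := max_exec_size max_s; rewrite size_cat size_ra -[RHS]addn0 => /addnI /size0nil s0.
by rewrite s0 cats0 in max_s.
Qed.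

Lemma eq_deal_hands h h' : (forall P, hand h' P = hand h P) -> h' = h.
Proof.
move=> eq_hands; apply/ffunP => c.
have : c \in hand h (h c) by rewrite inE.
by rewrite -eq_hands inE => /eqP.
Qed.

Lemma max_exec_inlE h f s : max_exec h (inl f :: s) =
  let V := ~: (f @: hand h agentA) in
  [&& size s == m, bijb f, Defs.transversal V &
      [forall k : 'I_m, nth (inr set0) s k == inr (proj_down V @: (f @: hand h (agentB k)))]].
Proof. by []. Qed.

Lemma agentB_neqA k : agentB k != agentA.
Proof. by rewrite eq_sym neq_lift. Qed.

Lemma imset_hand_subsetC h f P Q : injective f -> P != Q ->
  f @: hand h P \subset ~: (f @: hand h Q).
Proof.
move=> f_inj neqPQ; apply/subsetP => _ /imsetP [c + ->]; rewrite !inE => /eqP hc.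
by rewrite mem_imset // inE hc.
Qed.

Lemma max_exec_hyperplane_eq tau h h' f s P :
  (0 < d)%N -> (forall k, #|F| ^ d.-1 < tau (agentB k))%N -> is_deal tau h ->
  max_exec h (inl f :: s) -> max_exec h' (inl f :: s) -> hand h' P = hand h P ->
  ~: (f @: hand h' agentA) = ~: (f @: hand h agentA).
Proof.
rewrite !max_exec_inlE => d_gt0 tauB deal_h /and4P [_ /andP [/injectiveP f_inj _] tr_V _].
case/and4P => _ _ tr_V' _; case: (unliftP ord0 P) => [k ->|->] eq_hand; last by rewrite eq_hand.
have sub_meet : f @: hand h (agentB k) \subset ~: (f @: hand h' agentA) :&: ~: (f @: hand h agentA).
  rewrite subsetI imset_hand_subsetC ?agentB_neqA // andbT -[agentB k]/(lift ord0 k) -eq_hand.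
  exact: imset_hand_subsetC (agentB_neqA k).
apply/eqP; apply: contraT => neqV; move: tr_V tr_V' sub_meet neqV.
case/existsP => a /existsP [b /eqP ->] /existsP [a' /existsP [b' /eqP ->]].
move=> /subset_leq_card sub_meet /(card_hyperplane_meet d_gt0) /(leq_trans sub_meet).
by rewrite card_imset // (eqP (forallP deal_h _)) leqNgt tauB.
Qed.

Lemma max_exec_hands_eq h h' f s :
  max_exec h (inl f :: s) -> max_exec h' (inl f :: s) ->
  ~: (f @: hand h' agentA) = ~: (f @: hand h agentA) -> h' = h.
Proof.
rewrite !max_exec_inlE => /and4P [_ /andP [/injectiveP f_inj _] tr_V /forallP X_h].
case/and4P => _ _ _ /forallP X_h' eqV.
have eq_handA : hand h' agentA = hand h agentA by apply: (imset_inj f_inj); apply: setC_inj.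
apply: eq_deal_hands => P; case: (unliftP ord0 P) => [k ->|->]; last exact: eq_handA.
have := X_h' k; rewrite eqV (eqP (X_h k)) => /eqP [] eq_proj.
apply: (imset_inj f_inj); apply: (imset_in_inj (proj_down_inj tr_V)) (esym eq_proj).
  by rewrite -eqV; exact: imset_hand_subsetC (agentB_neqA k).
exact: imset_hand_subsetC (agentB_neqA k).
Qed.

Lemma max_exec_deal_unique tau h h' rho P :
  (0 < d)%N -> (forall k, #|F| ^ d.-1 < tau (agentB k))%N -> is_deal tau h ->
  max_exec h rho -> max_exec h' rho -> hand h' P = hand h P -> h' = h.
Proof.
case: rho => [|[f|X] s] d_gt0 tauB deal_h //; last by rewrite max_exec_inr.
move=> max_h max_h' eq_hand; apply: (max_exec_hands_eq max_h max_h').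
exact: (max_exec_hyperplane_eq d_gt0 tauB deal_h max_h max_h' eq_hand).
Qed.

(* The hand of A can be sent onto the complement of the hyperplane x_(d+1) = 0. *)
Lemma Pi_nil_neq0 tau h : is_deal tau h -> tau agentA = (#|F| ^ d.+1 - #|F| ^ d)%N ->
  #|Omega| = (#|F| ^ d.+1)%N -> Pi h ([::] : run) != set0.
Proof.
move=> deal_h tauA cardO.
have card_point : #|{: point}| = (#|F| ^ d.+1)%N by rewrite card_mx mul1n.
pose V := hyperplane (0 : 'rV[F]_d) 0.
have card_notV : #|hand h agentA| = #|~: V|.
  by rewrite (eqP (forallP deal_h _)) tauA -card_point -(card_hyperplane 0 0) -(cardsC V) addKn.
have [g [g_inj gA]] := exists_inj_imset 0 (etrans cardO (esym card_point)) card_notV.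
pose f := [ffun c => g c].
have fA : f @: hand h agentA = ~: V by rewrite -gA; apply: eq_imset => c; rewrite ffunE.
have f_inj : injective f by move=> c c'; rewrite !ffunE => /g_inj.
apply/set0Pn; exists (inl f); apply/PiP.
exists [seq inr (proj_down V @: (f @: hand h (agentB k))) | k <- enum 'I_m].
rewrite /= max_exec_inlE fA setCK size_map size_enum_ord eqxx /=.
apply/and3P; split.
- apply/andP; split; first exact/injectiveP.
  by apply/forallP => y; apply: inj_card_onto => //; rewrite card_point cardO.
- by apply/existsP; exists 0; apply/existsP; exists 0.
- by apply/forallP => k; rewrite (nth_map k) ?size_enum_ord // nth_ord_enum.
Qed.

Theorem shifted_projection_informative tau :
  (0 < d)%N -> (forall k, #|F| ^ d.-1 < tau (agentB k))%N ->
  tau agentA = (#|F| ^ d.+1 - #|F| ^ d)%N -> #|Omega| = (#|F| ^ d.+1)%N ->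
  informative d F Omega tau.
Proof.
move=> d_gt0 tauB tauA cardO h rho deal_h exec_h Pi0 P [h' [_ exec_h' neq_h eq_hand]].
have max_h := execution_terminal_max_exec (Pi_nil_neq0 deal_h tauA cardO) exec_h Pi0.
have max_h' := execution_full_max_exec exec_h' (max_exec_size max_h).
exact/neq_h/(max_exec_deal_unique d_gt0 tauB deal_h max_h max_h' eq_hand).
Qed.

Definition deal_perm (pi : {perm Omega}) h : deal := [ffun c => h (pi c)].

Definition relabel (pi : {perm Omega}) f : {ffun Omega -> point} := [ffun c => f (pi c)].

Definition token_perm (pi : {perm Omega}) a : token :=
  if a is inl f then inl (relabel pi f) else a.

Lemma hand_deal_perm pi h P : hand (deal_perm pi h) P = pi @^-1: hand h P.
Proof. by apply/setP => c; rewrite !inE ffunE. Qed.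

Lemma is_deal_perm tau pi h : is_deal tau (deal_perm pi h) = is_deal tau h.
Proof. by apply: eq_forallb => P; rewrite hand_deal_perm card_preimset //; apply: perm_inj. Qed.

Lemma deal_perm_inj pi : injective (deal_perm pi).
Proof.
by apply: (can_inj (g := deal_perm (pi^-1)%g)) => h; apply/ffunP => c; rewrite !ffunE permKV.
Qed.

Lemma relabelK pi : cancel (relabel pi) (relabel (pi^-1)%g).
Proof. by move=> f; apply/ffunP => c; rewrite !ffunE permKV. Qed.

Lemma relabelKV pi : cancel (relabel (pi^-1)%g) (relabel pi).
Proof. by move=> f; apply/ffunP => c; rewrite !ffunE permK. Qed.

Lemma token_perm_inj pi : injective (token_perm pi).
Proof. by apply: (can_inj (g := token_perm (pi^-1)%g)) => [[f|X]] //=; rewrite relabelK. Qed.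

Lemma bijb_relabel pi f : bijb (relabel pi f) = bijb f.
Proof.
rewrite /bijb; congr andb.
  apply/injectiveP/injectiveP => f_inj x y eq_xy.
    rewrite -(permKV pi x) -(permKV pi y); congr (pi _).
    by apply: f_inj; rewrite !ffunE !permKV.
  by move: eq_xy; rewrite !ffunE => /f_inj /perm_inj.
apply: eq_forallb => y; apply/codomP/codomP => [[c]|[c ->]].
  by rewrite ffunE => ->; exists (pi c).
by exists ((pi^-1)%g c); rewrite ffunE permKV.
Qed.

Lemma bijb_comp (g : point -> point) f : injective g -> bijb [ffun c => g (f c)] = bijb f.
Proof.
move=> g_inj; rewrite /bijb; congr andb.
  apply/injectiveP/injectiveP => f_inj x y; last by rewrite !ffunE => /g_inj /f_inj.
  by move/(congr1 g); rewrite -!(ffunE (fun c => g (f c))) => /f_inj.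
apply/forallP/forallP => f_onto y.
  by case/codomP: (f_onto (g y)) => c; rewrite ffunE => /g_inj ->; apply: codom_f.
have /codomP [z ->] : y \in codom g by apply: inj_card_onto.
by case/codomP: (f_onto z) => c ->; apply/codomP; exists c; rewrite ffunE.
Qed.

Lemma max_exec_perm pi h f s :
  max_exec (deal_perm pi h) (inl (relabel pi f) :: s) = max_exec h (inl f :: s).
Proof.
have imset_hand P : relabel pi f @: hand (deal_perm pi h) P = f @: hand h P.
  apply/setP => x; apply/imsetP/imsetP => [[c + ->] | [c h_c ->]].
    by rewrite hand_deal_perm inE => h_pic; exists (pi c); rewrite ?ffunE.
  exists ((pi^-1)%g c); last by rewrite ffunE permKV.
  by move: h_c; rewrite hand_deal_perm !inE permKV.
rewrite /max_exec /= bijb_relabel !imset_hand.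
by under eq_forallb do rewrite imset_hand.
Qed.

Lemma max_exec_shear h f (t : dpoint d F) (b : F) r :
  max_exec h (inl [ffun c => shear t b (f c)] :: r) = max_exec h (inl f :: r).
Proof.
have imset_hand P : [ffun c => shear t b (f c)] @: hand h P = shear t b @: (f @: hand h P).
  by rewrite -imset_comp; apply: eq_imset => c; rewrite ffunE.
have inj_tb : injective (shear t b) by apply: shear_inj.
rewrite /max_exec /= (bijb_comp _ inj_tb) imset_hand -(imset_setC _ inj_tb) transversal_shear.
case tr_V : (Defs.transversal _); rewrite ?andbF //; congr [&& _, _, _ & _].
apply: eq_forallb => k; rewrite imset_hand -(imset_comp (proj_down _) (shear t b)).
congr (_ == inr _).
by apply: eq_imset => x; apply: proj_down_shear.
Qed.

Lemma card_Pi_nil_perm pi h : #|Pi (deal_perm pi h) ([::] : run)| = #|Pi h ([::] : run)|.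
Proof.
suff -> : Pi (deal_perm pi h) [::] = token_perm (pi^-1)%g @^-1: Pi h [::].
  by rewrite card_preimset //; apply: token_perm_inj.
apply/setP => -[f|X]; rewrite [RHS]in_set.
  by apply/PiP/PiP => -[r max_r]; exists r; move: max_r;
    rewrite !cat1s -(max_exec_perm pi h (relabel (pi^-1)%g f) r) relabelKV.
by apply/PiP/PiP => -[r]; rewrite cat1s max_exec_inr.
Qed.

Lemma path_prob_eq h1 h2 f s :
  (forall r, max_exec h1 (inl f :: r) = max_exec h2 (inl f :: r)) ->
  #|Pi h1 ([::] : run)| = #|Pi h2 ([::] : run)| ->
  path_prob h1 (inl f :: s) = path_prob h2 (inl f :: s).
Proof.
move=> eq_max eq_card0.
have eq_if (b1 b2 : bool) (n1 n2 : nat) : b1 = b2 -> n1 = n2 ->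
    (if b1 then n1%:R^-1 else 0) = (if b2 then n2%:R^-1 else 0) :> rat.
  by move=> -> ->.
have eq_Pi r : Pi h1 (inl f :: r) = Pi h2 (inl f :: r).
  by apply/setP => a; apply/PiP/PiP => -[t max_t]; exists t; move: max_t; rewrite /= eq_max.
have f_in : (inl f \in Pi h1 [::]) = (inl f \in Pi h2 [::]).
  by apply/PiP/PiP => -[t max_t]; exists t; move: max_t; rewrite /= eq_max.
rewrite /path_prob; apply: eq_bigr => -[[|k] lt_k] _; cbn [nth take nat_of_ord].
  exact: eq_if f_in eq_card0.
by rewrite eq_Pi.
Qed.

Lemma bijb_bijective f : bijb f -> bijective f.
Proof.
case/andP => /injectiveP f_inj /forallP f_onto; apply: (inj_card_bij f_inj).
by rewrite -(card_codom f_inj); apply/subset_leq_card/subsetP => y _; apply: f_onto.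
Qed.

(* Conjugating by [f], a shear sending [f c] to [f c'] becomes a permutation of the cards. *)
Lemma max_exec_perm_transitive f c c' : bijb f ->
  exists pi : {perm Omega}, pi c' = c /\
    forall h r, max_exec (deal_perm pi h) (inl f :: r) = max_exec h (inl f :: r).
Proof.
move/bijb_bijective => [finv fK finvK].
have [t [b shear_fc]] := shear_transitive (f c) (f c').
have sigma_inj : injective (fun x => finv (shear t b (f x))).
  by move=> x y /(can_inj finvK) /shear_inj /(can_inj fK).
pose sigma := perm sigma_inj.
exists (sigma^-1)%g; split.
  by apply: (@perm_inj _ sigma); rewrite permKV permE /= shear_fc fK.
have f_relabel : f = relabel (sigma^-1)%g [ffun x => shear t b (f x)].
  apply/ffunP => x; rewrite !ffunE -[in LHS](permKV sigma x) permE /=.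
  by rewrite finvK.
by move=> h r; rewrite {1}f_relabel max_exec_perm max_exec_shear.
Qed.

Lemma path_prob_nil h : path_prob h ([::] : run) = 1.
Proof. exact: big_ord0. Qed.

Lemma path_prob_symmetry tau rho c c' : is_run tau rho ->
  exists pi : {perm Omega}, pi c' = c /\
    forall h, path_prob (deal_perm pi h) rho = path_prob h rho.
Proof.
case: rho => [_ | a s /existsP [h0 /andP [_ /execution_head /PiP [r]]]].
  exists (tperm c c'); split; first exact: tpermR.
  by move=> h; rewrite !path_prob_nil.
case: a => [f | X]; last by rewrite cat1s max_exec_inr.
case/andP => _ /and3P [bij_f _ _].
have [pi [pi_c' max_pi]] := max_exec_perm_transitive c c' bij_f.
exists pi; split; first exact: pi_c'.
by move=> h; apply: path_prob_eq (max_pi h) (card_Pi_nil_perm pi h).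
Qed.

Lemma prob_card_run_perm tau P rho (pi : {perm Omega}) c c' : pi c' = c ->
  (forall h, path_prob (deal_perm pi h) rho = path_prob h rho) ->
  prob_card_run tau c P rho = prob_card_run tau c' P rho.
Proof.
move=> pi_c' path_pi; rewrite /prob_card_run [RHS](reindex_inj (@deal_perm_inj pi)) /=.
apply: eq_big => h; first by rewrite ffunE pi_c'.
by move=> _; rewrite path_pi /deal_prob is_deal_perm.
Qed.

Lemma sum_prob_card_run tau P rho :
  \sum_(c : Omega) prob_card_run tau c P rho = (tau P)%:R * prob_run tau rho.
Proof.
rewrite /prob_card_run /prob_run; under eq_bigr do rewrite big_mkcond.
rewrite exchange_big mulr_sumr; apply: eq_bigr => h _ /=.
rewrite -big_mkcond sumr_const mulr_natl /deal_prob.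
have [deal_h | _] := boolP (is_deal tau h); last by rewrite !mul0r !mul0rn.
rewrite -(eqP (forallP deal_h P)); congr (_ *+ _); apply: eq_card => c.
by rewrite inE.
Qed.

Lemma prob_run_gt0 tau rho : is_run tau rho -> 0 < prob_run tau rho.
Proof.
case/existsP => h0 /andP [deal_h0 /forallP exec_h0].
have deal_prob_ge0 h : 0 <= deal_prob tau h.
  by rewrite /deal_prob; case: ifP => // _; rewrite invr_ge0 ler0n.
have path_prob_ge0 h : 0 <= path_prob h rho.
  by apply: prodr_ge0 => k _; case: ifP => // _; rewrite invr_ge0 ler0n.
rewrite /prob_run (bigD1 h0) //= ltr_wpDr ?sumr_ge0 // => [h _|].
  exact: mulr_ge0.
apply: mulr_gt0.
  rewrite /deal_prob deal_h0 invr_gt0 ltr0n; by apply/card_gt0P; exists h0; rewrite inE.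
apply: prodr_gt0 => k _; rewrite exec_h0 invr_gt0 ltr0n; apply/card_gt0P.
by exists (nth (inr set0) rho k).
Qed.

Theorem shifted_projection_safe tau : (\sum_(Q : agent m) tau Q)%N = #|Omega| ->
  perfectly_safe d F Omega tau.
Proof.
move=> sum_tau rho run_rho c P.
have uniform c' : prob_card_run tau c' P rho = prob_card_run tau c P rho.
  have [pi [pi_c path_pi]] := path_prob_symmetry c' c run_rho.
  exact: prob_card_run_perm pi_c path_pi.
have := sum_prob_card_run tau P rho.
rewrite (eq_bigr _ (fun c' _ => uniform c')) sumr_const sum_tau => sum_eq.
apply/eqP; rewrite eqr_div ?lt0r_neq0 ?prob_run_gt0 ?ltr0n //; last first.
  by apply/card_gt0P; exists c.
by rewrite mulr_natr sum_eq mulrC.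
Qed.

End Protocol.

Theorem mainTheorem1 (m : nat) (F : finFieldType) (d : nat) (Omega : finType)
    (tau : 'I_m.+1 -> nat) :
  (1 < m)%N -> (m < #|F|)%N -> (0 < d)%N ->
  (forall P : 'I_m.+1, 0 < tau P)%N ->
  (\sum_(P : 'I_m.+1) tau P)%N = (#|F| ^ d.+1)%N ->
  tau ord0 = (#|F| ^ d.+1 - #|F| ^ d)%N ->
  (forall k : 'I_m, #|F| ^ d.-1 < tau (lift ord0 k))%N ->
  #|Omega| = (#|F| ^ d.+1)%N ->
  informative d F Omega tau /\ perfectly_safe d F Omega tau.
Proof.
move=> _ _ d_gt0 _ sum_tau tauA tauB cardO; split.
  exact: shifted_projection_informative d_gt0 tauB tauA cardO.
by apply: shifted_projection_safe; rewrite sum_tau cardO.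
Qed.
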